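(* Let $n\ge 1$ and let $\Sigma_0=(1\,2)(3\,4)\cdots(2n-1\,\,2n)\in S_{2n}$. Let $S_n[S_2]=\{\xi\in S_{2n}:\ \xi\Sigma_0\xi^{-1}=\Sigma_0\}$. Then for every $\sigma\in S_{2n}$ there exist $\xi\in S_n[S_2]$ and $\tau\in S_n$ such that $$\xi^{-1}\,\sigma^{-1}\Sigma_0\sigma\,\xi=(1\ \ 2\tau(1))\,(3\ \ 2\tau(2))\cdots(2n-1\ \ 2\tau(n)),$$ i.e. $\xi^{-1}\sigma^{-1}\Sigma_0\sigma\xi=\prod_{i=1}^n(2i-1,\ 2\tau(i))$.
   Context: $S_m$ denotes the symmetric group on $\{1,\dots,m\}$. The subgroup $S_n[S_2]$ (the wreath product, or hyperoctahedral group, of order $2^n n!$) is the centraliser of the fixed-point-free involution $\Sigma_0$ in $S_{2n}$. In the paper's notation $i^-=2i-1$, $i^+=2i$, so the target permutation is $(1^-\,\tau(1)^+)\cdots(n^-\,\tau(n)^+)$. *)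

(* Points {1,...,2n} are encoded 0-based as 'I_(n.*2):
   paper's i^- = 2i-1 is lo (i-1) = 2(i-1), paper's i^+ = 2i is hi (i-1) = 2(i-1)+1. *)
From mathcomp Require Import all_boot all_fingroup.
Set Implicit Arguments. Unset Strict Implicit. Unset Printing Implicit Defensive.

Local Open Scope group_scope.

Lemma lo_proof (n : nat) (k : 'I_n) : (val k).*2 < n.*2.
Proof. by rewrite ltn_double ltn_ord. Qed.

Lemma hi_proof (n : nat) (k : 'I_n) : ((val k).*2).+1 < n.*2.
Proof. by rewrite -doubleS leq_double ltn_ord. Qed.

Definition lo (n : nat) (k : 'I_n) : 'I_(n.*2) := Ordinal (lo_proof k).
Definition hi (n : nat) (k : 'I_n) : 'I_(n.*2) := Ordinal (hi_proof k).

Definition Sigma0 (n : nat) : 'S_(n.*2) := \prod_(k < n) tperm (lo k) (hi k).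

Definition wreath (n : nat) : {set 'S_(n.*2)} :=
  [set xi : 'S_(n.*2) | xi * Sigma0 n * xi^-1 == Sigma0 n].

Definition target (n : nat) (tau : 'S_n) : 'S_(n.*2) :=
  \prod_(k < n) tperm (lo k) (hi (tau k)).

From mathcomp Require Import all_boot all_fingroup.
Set Implicit Arguments. Unset Strict Implicit. Unset Printing Implicit Defensive.
Local Open Scope group_scope.

(* Let Q := sigma^-1 Sigma0 sigma. Both Sigma0 and Q are fixed-point-free
   involutions, so the graph with edges {x, Sigma0 x} and {x, Q x} is a disjoint
   union of even cycles: x and Sigma0 x always lie in different orbits of
   Sigma0 * Q, and comparing these two orbits gives a 2-colouring for which both
   involutions swap colours. Exchanging x and Sigma0 x on the points whose
   colour agrees with their parity yields xi, which commutes with Sigma0 and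
   maps colour to parity. Then xi^-1 Q xi is an involution exchanging even and
   odd points, i.e. a product of transpositions (2i-1, 2 tau(i)). *)

Section ProdTperm.
Variables (m : nat) (T : finType) (a b : 'I_m -> T).
Hypotheses (a_inj : injective a) (b_inj : injective b).
Hypothesis a_neq_b : forall i j, a i != b j.

Lemma prod_tperm_seqE i (s : seq 'I_m) : uniq s ->
  (\prod_(k <- s) tperm (a k) (b k)) (a i) = (if i \in s then b i else a i) /\
  (\prod_(k <- s) tperm (a k) (b k)) (b i) = (if i \in s then a i else b i).
Proof.
elim: s => [|j s IH]; first by rewrite big_nil !perm1.
rewrite cons_uniq big_cons !permM in_cons => /andP[j_s /IH[IHa IHb]].
have [eq_ij|ij] := eqVneq i j.
  by subst j; rewrite tpermL tpermR IHa IHb (negbTE j_s).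
have aij : a j != a i by apply: contraNneq ij => /a_inj ->.
have bij : b j != b i by apply: contraNneq ij => /b_inj ->.
by rewrite !tpermD // eq_sym a_neq_b.
Qed.

Lemma prod_tperm_ordE i :
  (\prod_(k < m) tperm (a k) (b k)) (a i) = b i /\
  (\prod_(k < m) tperm (a k) (b k)) (b i) = a i.
Proof. by have := prod_tperm_seqE i (index_enum_uniq _); rewrite mem_index_enum. Qed.

End ProdTperm.

Lemma conjg_perm_involutive (T : finType) (s g : {perm T}) :
  involutive s -> involutive (s ^ g).
Proof. by move=> sK x; rewrite -(permKV g x) !permJ sK. Qed.

Lemma conjg_perm_fixpoint_free (T : finType) (s g : {perm T}) :
  (forall x, s x != x) -> forall x, (s ^ g) x != x.
Proof. by move=> s_fpf x; rewrite -(permKV g x) permJ (inj_eq perm_inj). Qed.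

Section Bicolouring.
Variables (T : finType) (s q : {perm T}).
Hypotheses (sK : involutive s) (qK : involutive q).
Hypotheses (s_fpf : forall x, s x != x) (q_fpf : forall x, q x != x).

Local Notation r := (s * q).

Lemma s_notin_porbit x : s x \notin porbit r x.
Proof.
apply/porbitP => -[k]; apply/eqP; elim/ltn_ind: k x => -[|[|k]] IH x.
- by rewrite expg0 perm1 s_fpf.
- by rewrite expg1 permM eq_sym q_fpf.
- (* r s r = s, so the relation s x = r^(k+2) x descends to s (r x) = r^k (r x). *)
  have srs : s x = r (s (r x)) by rewrite !permM sK qK.
  have rk : (r ^+ k.+2) x = r ((r ^+ k) (r x)).
    by rewrite expgSr expgS !permM.
  by rewrite srs rk (inj_eq perm_inj) IH.
Qed.

Definition bicolour x :=
  (enum_rank (porbit r x) < enum_rank (porbit r (s x)))%N.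

Lemma bicolour_s x : bicolour (s x) = ~~ bicolour x.
Proof.
rewrite /bicolour sK ltn_neqAle leqNgt val_eqE (inj_eq enum_rank_inj).
have -> // : porbit r (s x) != porbit r x.
by apply: contraNneq (s_notin_porbit x) => <-; apply: porbit_id.
Qed.

Lemma bicolour_q x : bicolour (q x) = ~~ bicolour x.
Proof.
have orbit_qx : porbit r (q x) = porbit r (s x).
  by rewrite -[RHS](porbit_perm r 1) expg1 permM sK.
have orbit_sqx : porbit r (s (q x)) = porbit r x.
  by rewrite -(porbit_perm r 1 (s (q x))) expg1 permM sK qK.
by rewrite -bicolour_s /bicolour orbit_qx orbit_sqx sK.
Qed.

End Bicolouring.

Section Switch.
Variables (T : finType) (s : {perm T}) (c d : T -> bool).
Hypothesis sK : involutive s.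
Hypotheses (c_s : forall x, c (s x) = ~~ c x) (d_s : forall x, d (s x) = ~~ d x).

Definition switch x := if c x == d x then s x else x.

Lemma switchK : involutive switch.
Proof.
move=> x; rewrite /switch; have [cd|ncd] := eqVneq (c x) (d x).
  by rewrite c_s d_s cd eqxx sK.
by rewrite (negbTE ncd).
Qed.

Definition switch_perm : {perm T} := perm (can_inj switchK).

Lemma switch_perm_s x : switch_perm (s x) = s (switch_perm x).
Proof. by rewrite !permE /switch c_s d_s (inj_eq negb_inj); case: ifP. Qed.

Lemma switch_perm_colour x : d (switch_perm x) = ~~ c x.
Proof.
rewrite permE /switch; case: eqP => [->|]; first by rewrite d_s.
by case: (c x); case: (d x).
Qed.

End Switch.

Section Points.
Variable n : nat.
Local Notation N := (n.*2).

Lemma half_ord_proof (y : 'I_N) : (val y)./2 < n.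
Proof. by rewrite ltn_half_double ltn_ord. Qed.

Definition half_ord (y : 'I_N) : 'I_n := Ordinal (half_ord_proof y).

Lemma odd_lo k : odd (@lo n k) = false. Proof. by rewrite /= odd_double. Qed.
Lemma odd_hi k : odd (@hi n k) = true. Proof. by rewrite /= odd_double. Qed.

Lemma lo_half_ord (y : 'I_N) : ~~ odd y -> lo (half_ord y) = y.
Proof.
by move=> /negbTE y_even; apply: val_inj; rewrite /= -[RHS]odd_double_half y_even.
Qed.

Lemma hi_half_ord (y : 'I_N) : odd y -> hi (half_ord y) = y.
Proof. by move=> y_odd; apply: val_inj; rewrite /= -[RHS]odd_double_half y_odd. Qed.

Lemma lo_inj : injective (@lo n).
Proof. by move=> i j /(congr1 val) /= /(congr1 half); rewrite !doubleK => /val_inj. Qed.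

Lemma hi_inj : injective (@hi n).
Proof. by move=> i j /(congr1 val) /= [] /(congr1 half); rewrite !doubleK => /val_inj. Qed.

Lemma lo_neq_hi i j : @lo n i != hi j.
Proof. by apply/negP => /eqP /(congr1 (fun y : 'I_N => odd y)); rewrite odd_lo odd_hi. Qed.

Lemma Sigma0_lo k : Sigma0 n (lo k) = hi k.
Proof. by have [] := prod_tperm_ordE lo_inj hi_inj lo_neq_hi k. Qed.

Lemma Sigma0_hi k : Sigma0 n (hi k) = lo k.
Proof. by have [] := prod_tperm_ordE lo_inj hi_inj lo_neq_hi k. Qed.

Lemma odd_Sigma0 y : odd (Sigma0 n y) = ~~ odd y.
Proof.
case: (boolP (odd y)) => [/hi_half_ord|/lo_half_ord] <-.
  by rewrite Sigma0_hi odd_lo.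
by rewrite Sigma0_lo odd_hi.
Qed.

Lemma Sigma0K : involutive (Sigma0 n).
Proof.
move=> y; case: (boolP (odd y)) => [/hi_half_ord|/lo_half_ord] <-.
  by rewrite Sigma0_hi Sigma0_lo.
by rewrite Sigma0_lo Sigma0_hi.
Qed.

Lemma Sigma0_fixpoint_free y : Sigma0 n y != y.
Proof.
by apply/negP => /eqP /(congr1 (fun z : 'I_N => odd z)); rewrite odd_Sigma0; case: odd.
Qed.

Lemma target_lo (tau : 'S_n) k : target tau (lo k) = hi (tau k).
Proof.
have hi_tau_inj := inj_comp (@hi_inj) (@perm_inj _ tau).
by have [] := prod_tperm_ordE lo_inj hi_tau_inj (fun i j => lo_neq_hi i (tau j)) k.
Qed.

Lemma target_hi (tau : 'S_n) k : target tau (hi (tau k)) = lo k.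
Proof.
have hi_tau_inj := inj_comp (@hi_inj) (@perm_inj _ tau).
by have [] := prod_tperm_ordE lo_inj hi_tau_inj (fun i j => lo_neq_hi i (tau j)) k.
Qed.

Lemma involution_odd_swap_target (t : 'S_N) :
  involutive t -> (forall k, odd (t (lo k))) -> exists tau : 'S_n, t = target tau.
Proof.
move=> tK t_lo_odd; pose f k := half_ord (t (lo k)).
have t_lo k : t (lo k) = hi (f k) by rewrite hi_half_ord.
have f_inj : injective f.
  by move=> i j fij; apply: lo_inj; rewrite -[lo i]tK -[lo j]tK !t_lo fij.
exists (perm f_inj); apply/permP => y.
case: (boolP (odd y)) => [/hi_half_ord|/lo_half_ord] <-.
  rewrite -[half_ord y](permKV (perm f_inj)) target_hi permE.
  by rewrite -t_lo tK.
by rewrite target_lo permE t_lo.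
Qed.

End Points.

Theorem lemma1 (n : nat) (hn : 0 < n) (sigma : 'S_(n.*2)) :
  exists2 xi : 'S_(n.*2), xi \in wreath n &
    exists tau : 'S_n,
      (xi^-1 * sigma^-1 * Sigma0 n * sigma * xi)%g = target tau.
Proof.
have S0K := @Sigma0K n; have S0_fpf := @Sigma0_fixpoint_free n.
pose Q := Sigma0 n ^ sigma.
have QK : involutive Q := conjg_perm_involutive sigma S0K.
have Q_fpf := conjg_perm_fixpoint_free sigma S0_fpf.
have c_S0 := bicolour_s S0K QK S0_fpf Q_fpf.
have c_Q := bicolour_q S0K QK S0_fpf Q_fpf.
pose xi := switch_perm S0K c_S0 (@odd_Sigma0 n).
have xi_S0 y : xi (Sigma0 n y) = Sigma0 n (xi y) := switch_perm_s S0K c_S0 _ y.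
have odd_xi y : odd (xi y) = ~~ bicolour (Sigma0 n) Q y :=
  switch_perm_colour S0K c_S0 (@odd_Sigma0 n) y.
exists xi.
  by rewrite inE; apply/eqP/permP => y; rewrite !permM -xi_S0 permK.
have -> : xi^-1 * sigma^-1 * Sigma0 n * sigma * xi = Q ^ xi by rewrite !conjgE !mulgA.
apply: involution_odd_swap_target; first exact: conjg_perm_involutive.
move=> k; rewrite -(permKV xi (lo k)) permJ odd_xi c_Q.
by rewrite -odd_xi permKV odd_lo.
Qed.
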